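(* Let $D$ be a friendship digraph. If there is a vertex $v$ of $D$ such that $N^+(v)=V(D)-\{v\}$, then every vertex of $D$ other than $v$ has outdegree $2$.
   Context: All digraphs are finite and have neither loops nor parallel arcs (a pair of opposite arcs $(u,v)$ and $(v,u)$ is allowed). $N^+(v)$ denotes the set of out-neighbors of $v$. A friendship digraph is a nontrivial digraph (at least two vertices) in which any two distinct vertices have exactly one common out-neighbor. *)

From mathcomp Require Import all_boot.
Set Implicit Arguments. Unset Strict Implicit. Unset Printing Implicit Defensive.

(* A digraph on a finite vertex type T is given by its arc relation e
   (e u v means there is an arc (u,v)); loops are excluded by irreflexivity,
   parallel arcs are impossible in a relation, opposite arcs are allowed. *)
Definition loopless (T : finType) (e : rel T) : Prop := irreflexive e.

Definition outN (T : finType) (e : rel T) (v : T) : {set T} := [set w | e v w].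

Definition friendship_digraph (T : finType) (e : rel T) : Prop :=
  [/\ 1 < #|T|, loopless e &
      forall u v : T, u != v -> #|outN e u :&: outN e v| = 1].

From mathcomp Require Import all_boot.
Set Implicit Arguments. Unset Strict Implicit. Unset Printing Implicit Defensive.

(* If v points to every other vertex, the common out-neighbours of u and v are
   N^+(u) minus v, so exactly one out-neighbour of u differs from v.  No vertex
   has outdegree 1: if N^+(u) = {w}, the common out-neighbour of u and w would
   have to be w itself, a loop.  Hence v is an out-neighbour of u and u has
   outdegree 2. *)

Lemma outNI_outN_universal (T : finType) (e : rel T) (u v : T) :
  outN e v = [set: T] :\ v -> outN e u :&: outN e v = outN e u :\ v.
Proof. by move=> hv; apply/setP => x; rewrite hv !inE andbT andbC. Qed.

Lemma friendship_outN_card_neq1 (T : finType) (e : rel T) (u : T) :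
  friendship_digraph e -> #|outN e u| != 1.
Proof.
case=> _ hloop hfriend; apply/negP => /cards1P [w huw].
have /[!inE] euw : w \in outN e u by rewrite huw set11.
have neq_uw : u != w by apply: contraTneq euw => ->; rewrite hloop.
have common_w : outN e u :&: outN e w = set0.
  by apply/setP => x; rewrite huw !inE; case: eqP => // ->; rewrite hloop.
by move: (hfriend u w neq_uw); rewrite common_w cards0.
Qed.

Theorem corollary2p3 (T : finType) (e : rel T) :
  friendship_digraph e ->
  forall v : T, outN e v = [set: T] :\ v ->
  forall u : T, u != v -> #|outN e u| = 2.
Proof.
move=> hD v hv u neq_uv.
have one_besides_v : #|outN e u :\ v| = 1.
  by rewrite -(outNI_outN_universal u hv); case: hD => _ _ ->.
have := friendship_outN_card_neq1 u hD.
by rewrite (cardsD1 v) one_besides_v; case: (v \in outN e u).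
Qed.
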